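(* Let $\Gamma$ be a finite connected tetravalent $G$-half-arc-transitive graph, $G\leq\mathrm{Aut}(\Gamma)$. Then $G$ has a normal subgroup $N$ such that $\Gamma_N$ is a tetravalent basic $G/N$-half-arc-transitive graph.
   Context: $\Gamma$ is $G$-half-arc-transitive if $G$ is transitive on vertices and edges but not on arcs. For $N\trianglelefteq G$, the normal quotient $\Gamma_N$ has as vertices the $N$-orbits on $V(\Gamma)$, two distinct orbits adjacent iff some edge of $\Gamma$ joins them; $G/N$ acts on it when $N$ is the kernel of the action. A connected tetravalent $X$-half-arc-transitive graph $\Sigma$ is basic (for $X$) if $\Sigma_M$ has valency at most 2 for every non-trivial normal subgroup $M$ of $X$. *)

From mathcomp Require Import all_boot all_fingroup.
Local Open Scope group_scope.
Set Implicit Arguments. Unset Strict Implicit. Unset Printing Implicit Defensive.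

(* A graph is given by a vertex set V : {set T} on a finType T and an
   adjacency relation e : rel T (only used between vertices of V).
   A group X acts on it through an action [to] of a group on T. *)
Definition nbhd {T : finType} (V : {set T}) (e : rel T) (x : T) : {set T} := [set y in V | e x y].

Section Graphs.
Variables (aT : finGroupType) (D : {set aT}) (T : finType) (to : action D T).

Definition regular_of (V : {set T}) (e : rel T) (k : nat) :=
  forall x, x \in V -> #|nbhd V e x| = k.

Definition gconnected (V : {set T}) (e : rel T) :=
  forall x y, x \in V -> y \in V ->
    connect [rel u v | [&& u \in V, v \in V & e u v]] x y.

Definition gedges (V : {set T}) (e : rel T) : {set {set T}} :=
  [set [set x; y] | x in V, y in V & e x y].

Definition acts_by_auts (X : {set aT}) (V : {set T}) (e : rel T) :=
  [/\ X \subset D, [acts X, on V | to] &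
      forall g u v, g \in X -> u \in V -> v \in V -> e (to u g) (to v g) = e u v].

Definition arc_transitive (X : {set aT}) (V : {set T}) (e : rel T) :=
  forall u v u' v', u \in V -> v \in V -> e u v -> u' \in V -> v' \in V -> e u' v' ->
    exists2 g, g \in X & to u g = u' /\ to v g = v'.

Definition half_arc_transitive (X : {set aT}) (V : {set T}) (e : rel T) :=
  [/\ acts_by_auts X V e, [transitive X, on V | to],
      [transitive X, on gedges V e | to^*] & ~ arc_transitive X V e].

Definition nquot_vertices (M : {set aT}) (V : {set T}) : {set {set T}} :=
  [set orbit to M x | x in V].

Definition nquot_rel (e : rel T) : rel {set T} :=
  fun B C : {set T} => (B != C) && [exists x in B, exists y in C, e x y].

Definition basic (X : {group aT}) (V : {set T}) (e : rel T) :=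
  [/\ gconnected V e, regular_of V e 4, half_arc_transitive X V e &
      forall M : {group aT}, M <| X -> M :!=: 1 ->
        forall B, B \in nquot_vertices M V ->
          #|nbhd (nquot_vertices M V) (nquot_rel e) B| <= 2].

End Graphs.

From mathcomp Require Import all_boot all_fingroup zify.
Set Implicit Arguments. Unset Strict Implicit. Unset Printing Implicit Defensive.
Local Open Scope group_scope.

(* The G-orbit of one arc (x0, y0) is a G-invariant orientation of Γ: as G is edge- but
   not arc-transitive, every edge carries exactly one of its two arcs, so each vertex has
   two out- and two in-neighbours.  For M normal in G, the M-orbits of the out-neighbours
   and of the in-neighbours of a vertex are either disjoint or equal, so Γ_M has valency
   0, 1, 2 or 4; when it is 4 the orientation descends to Γ_M, which is then
   G/M-half-arc-transitive.  Take N maximal among the normal subgroups with Γ_N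
   tetravalent.  The kernel of G on the N-orbits has the same orbits as N, hence is N.
   A nontrivial normal subgroup of G/N has a preimage K > N, so Γ_K has valency at most 2,
   and Γ_K maps onto (Γ_N)_{K/N}. *)

Lemma out_in_degree_eq (T : finType) (S : {set T}) (R : rel T) a b :
  S != set0 ->
  {in S, forall x, #|[set y in S | R x y]| = a} ->
  {in S, forall y, #|[set x in S | R x y]| = b} -> a = b.
Proof.
move=> /set0Pn[z zS] outS inS.
have degE (P : pred T) : #|[set y in S | P y]| = (\sum_(y | (y \in S) && P y) 1)%N.
  by rewrite -sum1_card; apply: eq_bigl => y; rewrite inE.
have : (#|S| * a = #|S| * b)%N.
  rewrite -!sum_nat_const -(eq_bigr _ outS) -(eq_bigr _ inS).
  under eq_bigr do rewrite degE.
  rewrite (exchange_big_dep (mem S)) => [|x y _ /andP[] //].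
  by apply: eq_bigr => y yS; rewrite degE; apply: eq_bigl => x; rewrite [y \in S]yS.
by move/eqP; rewrite eqn_pmul2l ?card_gt0; [move/eqP | apply/set0Pn; exists z].
Qed.

Section NormalQuotient.
Variables (V : finType) (e : rel V) (M : {group {perm V}}).

Local Notation orb := (orbit 'P M).
Local Notation qV := (nquot_vertices 'P M [set: V]).

Definition quot_valency x := #|nbhd qV (nquot_rel e) (orb x)|.

Lemma nquot_verticesP B : reflect (exists x, B = orb x) (B \in qV).
Proof. by apply: (iffP imsetP) => [[x _ ->]|[x ->]]; exists x. Qed.

Lemma orbit_nquot_vertex x : orb x \in qV.
Proof. by apply/nquot_verticesP; exists x. Qed.

Lemma orbitP x y : reflect (exists2 m, m \in M & m x = y) (y \in orb x).
Proof. by apply: (iffP imsetP) => [[m Mm ->]|[m Mm <-]]; exists m. Qed.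

Lemma orbit_perm m x : m \in M -> orb (m x) = orb x.
Proof. exact: (orbit_act 'P). Qed.

Lemma orbit_setact_norm g x : g \in 'N(M) -> 'P^*%act (orb x) g = orb (g x).
Proof. by move=> /normP nMg; rewrite /= setact_orbit nMg. Qed.

Lemma nquot_rel_orbit u w :
  e u w -> orb u != orb w -> nquot_rel e (orb u) (orb w).
Proof.
move=> euw neq; rewrite /nquot_rel neq; apply/existsP; exists u.
by rewrite orbit_refl; apply/existsP; exists w; rewrite orbit_refl.
Qed.

Lemma nquot_rel_setact (g : {perm V}) B C : {mono g : u v / e u v} ->
  nquot_rel e ('P^*%act B g) ('P^*%act C g) = nquot_rel e B C.
Proof.
move=> ge; rewrite /nquot_rel (inj_eq (act_inj 'P^* g)); congr (_ && _).
apply/existsP/existsP => [[_ /andP[/imsetP[u Bu ->] /existsP[_ /andP[/imsetP[w Cw ->]]]]]|].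
  by rewrite /= ge => euw; exists u; rewrite Bu; apply/existsP; exists w; rewrite Cw.
case=> u /andP[Bu /existsP[w /andP[Cw euw]]]; exists (g u).
rewrite (mem_setact 'P g Bu); apply/existsP; exists (g w).
by rewrite (mem_setact 'P g Cw) /= ge.
Qed.

Lemma nquot_connected : gconnected [set: V] e -> gconnected qV (nquot_rel e).
Proof.
move=> conn _ _ /nquot_verticesP[x ->] /nquot_verticesP[y ->].
have /connectP[p] := conn x y (in_setT x) (in_setT y).
elim: p x => [|z p IHp] x /=; first by move=> _ ->; apply: connect0.
case/andP=> /and3P[_ _ exz] pz ly; apply: connect_trans (IHp z pz ly).
have [-> | neq] := eqVneq (orb x) (orb z); first exact: connect0.
by apply: connect1; rewrite /= !orbit_nquot_vertex nquot_rel_orbit.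
Qed.

End NormalQuotient.

Lemma quot_valency_eq_orbits (V : finType) (e : rel V) (M1 M2 : {group {perm V}}) :
  orbit 'P M1 =1 orbit 'P M2 -> quot_valency e M1 =1 quot_valency e M2.
Proof. by move=> EM x; rewrite /quot_valency /nquot_vertices EM (eq_imset _ EM). Qed.

Section HalfArcTransitive.
Variables (V : finType) (e : rel V) (G : {group {perm V}}).
Hypotheses (e_sym : symmetric e) (e_irr : irreflexive e)
  (e_reg4 : regular_of [set: V] e 4) (G_hat : half_arc_transitive 'P G [set: V] e).

Lemma edge_act g u v : g \in G -> e (g u) (g v) = e u v.
Proof. by case: G_hat => [[_ _ autG] _ _ _] Gg; apply: autG; rewrite ?inE. Qed.

Lemma vertex_transitive x y : exists2 g, g \in G & g x = y.
Proof.
case: G_hat => _ /atransP2 trG _ _.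
by have [g Gg ->] := trG x y (in_setT _) (in_setT _); exists g.
Qed.

Lemma nbhd_act g x : g \in G -> nbhd [set: V] e (g x) = g @: nbhd [set: V] e x.
Proof.
move=> Gg; apply/setP=> y; apply/idP/imsetP => [| [z]]; rewrite !inE => exy.
  by exists (g^-1 y); rewrite ?permKV // !inE -(permK g x) edge_act ?groupV.
by move->; rewrite edge_act.
Qed.

Lemma card_equivariant (T : finType) (to : action [set: {perm V}] T)
    (F : V -> {set T}) x y :
  (forall g z, g \in G -> F (g z) = to^*%act (F z) g) -> #|F x| = #|F y|.
Proof. by move=> FG; have [g Gg <-] := vertex_transitive y x; rewrite FG ?card_setact. Qed.

Lemma edge_exists : exists x y, e x y.
Proof.
case: G_hat => _ /imsetP[x _ _] _ _.
have : (0 < #|nbhd [set: V] e x|)%N by rewrite e_reg4.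
by case/card_gt0P=> y; rewrite !inE; exists x, y.
Qed.

Variables (x0 y0 : V).
Hypothesis e0 : e x0 y0.

Definition arc u v := (u, v) \in [set (g x0, g y0) | g : {perm V} in G].

Lemma arcP u v : reflect (exists2 g, g \in G & u = g x0 /\ v = g y0) (arc u v).
Proof. by apply: (iffP imsetP) => [[g Gg [-> ->]] | [g Gg [-> ->]]]; exists g. Qed.

Lemma arc0 : arc x0 y0.
Proof. by apply/arcP; exists 1; rewrite ?group1 ?perm1. Qed.

Lemma arc_edge u v : arc u v -> e u v.
Proof. by case/arcP=> g Gg [-> ->]; rewrite edge_act. Qed.

Lemma arc_act g u v : g \in G -> arc u v -> arc (g u) (g v).
Proof.
move=> Gg /arcP[h Gh [-> ->]]; apply/arcP; exists (h * g); rewrite ?groupM //.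
by rewrite !permM.
Qed.

Lemma arc_transitive_on u v u' v' : arc u v -> arc u' v' ->
  exists2 g, g \in G & g u = u' /\ g v = v'.
Proof.
case/arcP=> h Gh [-> ->] /arcP[k Gk [-> ->]].
by exists (h^-1 * k); rewrite ?groupM ?groupV // !permM !permK.
Qed.

(* Some g in G maps the edge {x0, y0} onto {u, v}, hence (x0, y0) onto (u, v) or (v, u). *)
Lemma edge_arc u v : e u v -> arc u v || arc v u.
Proof.
move=> euv; case: G_hat => _ _ /atransP2 trE _.
have edge_mem a b : e a b -> [set a; b] \in gedges [set: V] e.
  by move=> eab; apply/imset2P; exists a b; rewrite ?inE.
have [g Gg] := trE _ _ (edge_mem _ _ e0) (edge_mem _ _ euv).
rewrite /= /setact imsetU1 imset_set1 /= /aperm => Euv.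
have : u \in [set u; v] by rewrite !inE eqxx.
have : v \in [set u; v] by rewrite !inE eqxx orbT.
rewrite Euv !inE => /orP[] /eqP vE /orP[] /eqP uE; rewrite uE vE ?e_irr in euv *;
  by rewrite ?(arc_act Gg arc0) ?orbT.
Qed.

Lemma arc_asym u v : arc u v -> arc v u -> False.
Proof.
move=> auv avu; case: G_hat => _ _ _; apply.
have all_arcs a b : e a b -> arc a b.
  move=> eab; case/orP: (edge_arc eab) => // aba.
  have [h Gh [<- <-]] := arc_transitive_on auv aba.
  exact: arc_act.
move=> u1 v1 u2 v2 _ _ /all_arcs a1 _ _ /all_arcs a2.
by have [g Gg gE] := arc_transitive_on a1 a2; exists g.
Qed.

Definition out_nbhd x := [set y | arc x y].
Definition in_nbhd x := [set y | arc y x].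

Lemma nbhd_out_in x : nbhd [set: V] e x = out_nbhd x :|: in_nbhd x.
Proof.
apply/setP=> y; rewrite !inE; apply/idP/idP; first exact: edge_arc.
by case/orP => /arc_edge //; rewrite e_sym.
Qed.

Lemma disjoint_out_in x : [disjoint out_nbhd x & in_nbhd x].
Proof. by apply/pred0P => y /=; rewrite !inE; apply/andP => -[/arc_asym]. Qed.

Lemma out_nbhd_act g x : g \in G -> out_nbhd (g x) = g @: out_nbhd x.
Proof.
move=> Gg; apply/setP=> y; rewrite inE; apply/idP/imsetP => [a | [z]].
  exists (g^-1 y); last by rewrite permKV.
  by rewrite inE -(permK g x); apply: arc_act; rewrite ?groupV.
by rewrite inE => a ->; apply: arc_act.
Qed.

Lemma in_nbhd_act g x : g \in G -> in_nbhd (g x) = g @: in_nbhd x.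
Proof.
move=> Gg; apply/setP=> y; rewrite inE; apply/idP/imsetP => [a | [z]].
  exists (g^-1 y); last by rewrite permKV.
  by rewrite inE -(permK g x); apply: arc_act; rewrite ?groupV.
by rewrite inE => a ->; apply: arc_act.
Qed.

Lemma card_out_nbhd x : #|out_nbhd x| = 2.
Proof.
have sum4 : (#|out_nbhd x| + #|in_nbhd x|)%N = 4.
  rewrite -cardsUI (disjoint_setI0 (disjoint_out_in x)) cards0 addn0.
  by rewrite -nbhd_out_in e_reg4 ?inE.
suff : #|out_nbhd x| = #|in_nbhd x| by lia.
apply: (@out_in_degree_eq _ [set: V] arc); first by apply/set0Pn; exists x.
- move=> y _; rewrite (@card_equivariant _ 'P _ x y out_nbhd_act).
  by apply: eq_card => z; rewrite !inE.
- move=> y _; rewrite (@card_equivariant _ 'P _ x y in_nbhd_act).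
  by apply: eq_card => z; rewrite !inE.
Qed.

Section NormalSubgroup.
Variable M : {group {perm V}}.
Hypothesis nsMG : M <| G.

Local Notation orb := (orbit 'P M).
Local Notation qV := (nquot_vertices 'P M [set: V]).

Definition nbhd_orbits x := [set orb y | y in nbhd [set: V] e x].
Definition out_orbits x := [set orb y | y in out_nbhd x].
Definition in_orbits x := [set orb y | y in in_nbhd x].

Lemma orbit_setact g x : g \in G -> 'P^*%act (orb x) g = orb (g x).
Proof. by move=> Gg; apply: orbit_setact_norm; apply: subsetP (normal_norm nsMG) g Gg. Qed.

Lemma nbhd_nquot x : nbhd qV (nquot_rel e) (orb x) = nbhd_orbits x :\ orb x.
Proof.
apply/setP=> C; rewrite !inE; apply/idP/idP.
  case/andP=> /nquot_verticesP[z ->] /andP[neq /existsP[_ /andP[/orbitP[m Mm <-]]]].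
  case/existsP=> w /andP[zw emw]; rewrite eq_sym neq /=.
  have Gm := subsetP (normal_sub nsMG) m Mm.
  apply/imsetP; exists (m^-1 w).
    by rewrite !inE -(permK m x) edge_act ?groupV.
  by rewrite orbit_perm ?groupV //; apply/orbit_eqP; rewrite orbit_sym.
case/andP=> neq /imsetP[y]; rewrite !inE /= => exy Cy; subst C.
by rewrite orbit_nquot_vertex nquot_rel_orbit // eq_sym.
Qed.

Lemma quot_valencyE x :
  quot_valency e M x = (#|nbhd_orbits x| - (orb x \in nbhd_orbits x))%N.
Proof. by rewrite /quot_valency nbhd_nquot (cardsD1 (orb x) (nbhd_orbits x)) addKn. Qed.

Lemma nbhd_orbits_out_in x : nbhd_orbits x = out_orbits x :|: in_orbits x.
Proof. by rewrite /nbhd_orbits nbhd_out_in imsetU. Qed.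

Lemma orbits_act (F : V -> {set V}) g x : g \in G -> F (g x) = g @: F x ->
  [set orb y | y in F (g x)] = ('P^*%act ^~ g) @: [set orb y | y in F x].
Proof.
move=> Gg ->; rewrite -!imset_comp; apply: eq_imset => y /=.
by rewrite orbit_setact.
Qed.

Lemma quot_valency_act g x : g \in G -> quot_valency e M (g x) = quot_valency e M x.
Proof.
move=> Gg; rewrite !quot_valencyE -orbit_setact //.
rewrite /nbhd_orbits (orbits_act Gg (nbhd_act _ Gg)).
by rewrite card_imset ?(mem_imset _ _ (act_inj _ g)) //; apply: act_inj.
Qed.

Lemma quot_valency_const x y : quot_valency e M x = quot_valency e M y.
Proof. by have [g Gg <-] := vertex_transitive y x; rewrite quot_valency_act. Qed.

Lemma out_orbits_act g x :
  g \in G -> out_orbits (g x) = ('P^*%act ^~ g) @: out_orbits x.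
Proof. by move=> Gg; apply/orbits_act/out_nbhd_act. Qed.

Lemma in_orbits_act g x :
  g \in G -> in_orbits (g x) = ('P^*%act ^~ g) @: in_orbits x.
Proof. by move=> Gg; apply/orbits_act/in_nbhd_act. Qed.

Lemma card_out_orbits_le2 x : (#|out_orbits x| <= 2)%N.
Proof. by rewrite -(card_out_nbhd x) leq_imset_card. Qed.

Definition quot_arc (B C : {set V}) := [exists u in B, exists w in C, arc u w].

Lemma quot_arc_out x : [set C in qV | quot_arc (orb x) C] = out_orbits x.
Proof.
apply/setP=> C; rewrite inE; apply/andP/imsetP => [[/nquot_verticesP[z ->]] | [y]].
  case/existsP=> _ /andP[/orbitP[m Mm <-] /existsP[w /andP[zw amw]]].
  have Gm := subsetP (normal_sub nsMG) m Mm.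
  exists (m^-1 w); first by rewrite inE -(permK m x); apply: arc_act; rewrite ?groupV.
  by rewrite orbit_perm ?groupV //; apply/orbit_eqP; rewrite orbit_sym.
rewrite inE => axy ->; split; first exact: orbit_nquot_vertex.
by apply/existsP; exists x; rewrite orbit_refl; apply/existsP; exists y; rewrite orbit_refl.
Qed.

Lemma quot_arc_in x : [set B in qV | quot_arc B (orb x)] = in_orbits x.
Proof.
apply/setP=> B; rewrite inE; apply/andP/imsetP => [[/nquot_verticesP[z ->]] | [y]].
  case/existsP=> u /andP[zu /existsP[_ /andP[/orbitP[m Mm <-] aum]]].
  have Gm := subsetP (normal_sub nsMG) m Mm.
  exists (m^-1 u); first by rewrite inE -(permK m x); apply: arc_act; rewrite ?groupV.
  by rewrite orbit_perm ?groupV //; apply/orbit_eqP; rewrite orbit_sym.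
rewrite inE => ayx ->; split; first exact: orbit_nquot_vertex.
by apply/existsP; exists y; rewrite orbit_refl; apply/existsP; exists x; rewrite orbit_refl.
Qed.

Lemma card_out_in_orbits x : #|out_orbits x| = #|in_orbits x|.
Proof.
apply: (@out_in_degree_eq _ qV quot_arc).
- by apply/set0Pn; exists (orb x); apply: orbit_nquot_vertex.
- move=> _ /nquot_verticesP[y ->].
  by rewrite quot_arc_out (card_equivariant x y out_orbits_act).
- move=> _ /nquot_verticesP[y ->].
  by rewrite quot_arc_in (card_equivariant x y in_orbits_act).
Qed.

(* The stabiliser of x is transitive on the out-neighbours of x and preserves in_orbits x. *)
Lemma out_in_orbits_disjoint_or_eq x :
  out_orbits x :&: in_orbits x = set0 \/ out_orbits x = in_orbits x.
Proof.
have [-> | /set0Pn[C COI]] := eqVneq (out_orbits x :&: in_orbits x) set0.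
  by left.
right.
case/setIP: COI => /imsetP[y]; rewrite inE => axy -> yI.
apply/eqP; rewrite eqEcard card_out_in_orbits leqnn andbT.
apply/subsetP => C' /imsetP[y']; rewrite inE => axy' ->{C'}.
have [g Gg [gx <-]] := arc_transitive_on axy axy'.
by rewrite -orbit_setact // -{1}gx in_orbits_act //; apply: imset_f.
Qed.

Lemma arc_orbit_eq u v u' v' :
  arc u v -> arc u' v' -> orb u = orb v -> orb u' = orb v'.
Proof.
move=> auv au'v' Euv; have [g Gg [<- <-]] := arc_transitive_on auv au'v'.
by rewrite -!orbit_setact // Euv.
Qed.

Lemma quot_valency_loop x : orb x \in nbhd_orbits x -> quot_valency e M x = 0.
Proof.
case/imsetP=> y; rewrite !inE => exy Exy.
have arc_loop u v : arc u v -> orb u = orb v.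
  by move=> auv; case/orP: (edge_arc exy) => a; apply: (arc_orbit_eq a auv).
have edge_loop u v : e u v -> orb u = orb v.
  by case/edge_arc/orP => [/arc_loop | /arc_loop ->].
rewrite /quot_valency nbhd_nquot; apply/eqP; rewrite cards_eq0; apply/eqP/setP => C.
rewrite !inE; apply/negP => /andP[neq /imsetP[z]]; rewrite !inE => exz CE.
by rewrite CE (edge_loop _ _ exz) eqxx in neq.
Qed.

Lemma quot_valency_le2 x : quot_valency e M x != 4 -> (quot_valency e M x <= 2)%N.
Proof.
have [/quot_valency_loop -> // | notin] := boolP (orb x \in nbhd_orbits x).
rewrite quot_valencyE (negbTE notin) subn0 nbhd_orbits_out_in.
have := card_out_orbits_le2 x; have := card_out_in_orbits x.
have := cardsUI (out_orbits x) (in_orbits x).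
by case: (out_in_orbits_disjoint_or_eq x) => [-> | <-]; rewrite ?cards0 ?setUid; lia.
Qed.

Lemma quot_valency4_orbits x : quot_valency e M x = 4 ->
  orb x \notin nbhd_orbits x /\ out_orbits x :&: in_orbits x = set0.
Proof.
move=> val4; have notin : orb x \notin nbhd_orbits x.
  by apply/negP => /quot_valency_loop; rewrite val4.
split=> //; case: (out_in_orbits_disjoint_or_eq x) => // EOI.
move: val4; rewrite quot_valencyE (negbTE notin) nbhd_orbits_out_in -EOI setUid.
by have := card_out_orbits_le2 x; lia.
Qed.

Lemma quot_valency4_rel u w :
  quot_valency e M u = 4 -> e u w -> nquot_rel e (orb u) (orb w).
Proof.
case/quot_valency4_orbits=> notin _ euw; apply: nquot_rel_orbit => //.
by apply: contraNneq notin => ->; apply: imset_f; rewrite !inE.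
Qed.

End NormalSubgroup.

Section QuotientGraph.
Variable N : {group {perm V}}.
Hypothesis nsNG : N <| G.

Local Notation orb := (orbit 'P N).
Local Notation qV := (nquot_vertices 'P N [set: V]).
Local Notation modP := ('P^* %% N)%act.

Lemma orbit_fixed n x : n \in N -> 'P^*%act (orb x) n = orb x.
Proof. by move=> Nn; rewrite orbit_setact ?orbit_perm ?(subsetP (normal_sub nsNG)). Qed.

Lemma nquot_vertices_norm : G \subset 'N(qV | 'P^*).
Proof.
apply/subsetP=> g Gg; apply/astabsP => B; apply/nquot_verticesP/nquot_verticesP.
  by case=> y EB; exists (g^-1 y); rewrite -orbit_setact ?groupV // -EB actK.
by case=> y ->; exists (g y); rewrite orbit_setact.
Qed.

Lemma nquot_vertices_cent : N \subset 'C(qV | 'P^*).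
Proof.
by apply/subsetP=> n Nn; apply/astabP => _ /nquot_verticesP[y ->]; apply: orbit_fixed.
Qed.

Lemma quot_groupP q : q \in G / N -> exists2 g, g \in G & q = coset N g.
Proof. by case/morphimP=> g _ Gg ->; exists g. Qed.

Lemma modP_setact g B : g \in G -> B \in qV -> modP B (coset N g) = 'P^*%act B g.
Proof.
move=> Gg /nquot_verticesP[y ->] /=.
rewrite modactE ?in_setT ?(subsetP (normal_norm nsNG)) //.
by apply/afixP => n /setIP[_ Nn]; apply: orbit_fixed.
Qed.

Lemma modP_orbit g y : g \in G -> modP (orb y) (coset N g) = orb (g y).
Proof. by move=> Gg; rewrite modP_setact ?orbit_nquot_vertex ?orbit_setact. Qed.

Lemma quot_acts_by_auts : acts_by_auts modP (G / N) qV (nquot_rel e).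
Proof.
split; first exact: quotientS (subsetT G).
  by rewrite /acts_on astabs_mod ?nquot_vertices_cent ?quotientS ?nquot_vertices_norm.
move=> _ B C /quot_groupP[g Gg ->] qVB qVC.
by rewrite !modP_setact // nquot_rel_setact // => u v; apply: edge_act.
Qed.

Lemma quot_vertex_transitive : [transitive G / N, on qV | modP].
Proof.
apply/imsetP; exists (orb x0); first exact: orbit_nquot_vertex.
apply/setP=> B; apply/idP/imsetP => [/nquot_verticesP[y ->] | [_ /quot_groupP[g Gg ->] ->]].
  have [g Gg <-] := vertex_transitive x0 y.
  by exists (coset N g); rewrite ?mem_quotient ?modP_orbit.
by rewrite modP_orbit ?orbit_nquot_vertex.
Qed.

Lemma kernel_orbit x : orbit 'P 'C_G(qV | 'P^*) x = orb x.
Proof.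
have sNC : N \subset 'C_G(qV | 'P^*) by rewrite subsetI normal_sub ?nquot_vertices_cent.
apply/eqP; rewrite eqEsubset; apply/andP; split; apply/subsetP=> _ /orbitP[k Kk <-].
  case/setIP: Kk => _ /astab_act/(_ (orbit_nquot_vertex N x)) <-.
  exact: mem_setact (orbit_refl _ _ _).
by apply/orbitP; exists k; rewrite ?(subsetP sNC).
Qed.

Lemma kernel_normal : 'C_G(qV | 'P^*) <| G.
Proof. exact: normalGI nquot_vertices_norm (astab_normal _ _). Qed.

Hypothesis N4 : forall x, quot_valency e N x = 4.

Lemma quot_regular : regular_of qV (nquot_rel e) 4.
Proof. by move=> _ /nquot_verticesP[x ->]; apply: N4. Qed.

Lemma quot_rel u w : e u w -> nquot_rel e (orb u) (orb w).
Proof. exact: quot_valency4_rel. Qed.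

Lemma quot_edge_transitive : [transitive G / N, on gedges qV (nquot_rel e) | modP^*].
Proof.
have edge_image g : g \in G ->
    modP^*%act [set orb x0; orb y0] (coset N g) = [set orb (g x0); orb (g y0)].
  by move=> Gg; rewrite /= /setact imsetU1 imset_set1 !modP_orbit.
have edge_mem u w : e u w -> [set orb u; orb w] \in gedges qV (nquot_rel e).
  by move=> euw; apply/imset2P; exists (orb u) (orb w); rewrite ?inE ?orbit_nquot_vertex ?quot_rel.
apply/imsetP; exists [set orb x0; orb y0]; first exact: edge_mem.
apply/setP=> E; apply/idP/imsetP => [|[_ /quot_groupP[g Gg ->] ->]]; last first.
  by rewrite edge_image // edge_mem ?edge_act.
case/imset2P=> B C /nquot_verticesP[b ->]; rewrite inE => /andP[/nquot_verticesP[c ->]].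
case/andP=> _ /existsP[u /andP[/orbit_eqP <- /existsP[w /andP[/orbit_eqP <- euw]]]] ->.
have [a|a] := orP (edge_arc euw); have [g Gg [<- <-]] := arc_transitive_on arc0 a;
  by exists (coset N g); rewrite ?mem_quotient // edge_image // setUC.
Qed.

(* An element reversing the arc of orbits (orb x0, orb y0) would make orb x0 both an out-
   and an in-orbit of y0. *)
Lemma quot_not_arc_transitive : ~ arc_transitive modP (G / N) qV (nquot_rel e).
Proof.
move=> arcT; have Vx0 := orbit_nquot_vertex N x0; have Vy0 := orbit_nquot_vertex N y0.
have ey0x0 : e y0 x0 by rewrite e_sym.
have [_ /quot_groupP[g Gg ->]] := arcT _ _ _ _ Vx0 Vy0 (quot_rel e0) Vy0 Vx0 (quot_rel ey0x0).
rewrite !modP_orbit // => -[gx0 gy0].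
have x0_out : orb x0 \in out_orbits N y0.
  rewrite -(quot_arc_out nsNG) inE orbit_nquot_vertex; apply/existsP; exists (g x0).
  rewrite -gx0 orbit_refl; apply/existsP; exists (g y0).
  by rewrite -gy0 orbit_refl arc_act ?arc0.
have x0_in : orb x0 \in in_orbits N y0 by apply: imset_f; rewrite inE arc0.
have [_ /setP/(_ (orb x0))] := quot_valency4_orbits nsNG (N4 y0).
by rewrite inE x0_out x0_in inE.
Qed.

Lemma quot_half_arc_transitive : half_arc_transitive modP (G / N) qV (nquot_rel e).
Proof.
split; [exact: quot_acts_by_auts | exact: quot_vertex_transitive |
        exact: quot_edge_transitive | exact: quot_not_arc_transitive].
Qed.

End QuotientGraph.

Section DoubleQuotient.
Variables (N : {group {perm V}}) (M : {group coset_of N}).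
Hypotheses (nsNG : N <| G) (nsMGN : M <| G / N).

Local Notation orb := (orbit 'P N).
Local Notation qV := (nquot_vertices 'P N [set: V]).
Local Notation modP := ('P^* %% N)%act.
Local Notation K := (coset N @*^-1 M)%G.

Lemma cosetpre_sub : K \subset G.
Proof. by rewrite -(quotientGK nsNG) morphpreS ?normal_sub. Qed.

Lemma cosetpre_normalG : K <| G.
Proof. by rewrite -(quotientGK nsNG) cosetpre_normal. Qed.

Lemma modP_cosetpre k y : k \in K -> modP (orb y) (coset N k) = orb (k y).
Proof. by move=> Kk; rewrite modP_orbit ?(subsetP cosetpre_sub). Qed.

Lemma orbit_modP y : orbit modP M (orb y) = [set orb (k y) | k : {perm V} in K].
Proof.
apply/setP=> C; apply/imsetP/imsetP => [[m] | [k Kk ->]].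
  by rewrite -{1}(cosetpreK M) => /morphimP[k _ Kk ->] ->; exists k; rewrite ?modP_cosetpre.
by exists (coset N k); rewrite ?modP_cosetpre //; case/morphpreP: Kk.
Qed.

Lemma cover_orbit_modP y : cover (orbit modP M (orb y)) = orbit 'P K y.
Proof.
rewrite orbit_modP; apply/setP=> z; apply/bigcupP/orbitP.
  case=> _ /imsetP[k Kk ->] /orbitP[n Nn <-].
  by exists (k * n); rewrite ?permM // groupM // (subsetP (sub_cosetpre M)).
case=> k Kk <-; exists (orb (k y)); first exact: imset_f.
exact: orbit_refl.
Qed.

Lemma orbit_modP_eq y1 y2 :
  orbit 'P K y1 = orbit 'P K y2 -> orbit modP M (orb y1) = orbit modP M (orb y2).
Proof.
have sMD : M \subset [set: {perm V}] / N.
  exact: subset_trans (normal_sub nsMGN) (quotientS _ (subsetT G)).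
move=> Ey; apply/orbit_in_eqP => //.
have /orbitP[k Kk <-] : y1 \in orbit 'P K y2 by rewrite -Ey orbit_refl.
by rewrite -modP_cosetpre //; apply: mem_orbit; case/morphpreP: Kk.
Qed.

(* Taking unions of blocks maps the neighbours of a vertex of the double quotient
   injectively to neighbours in the quotient by K. *)
Lemma double_quot_valency_le y :
  (#|nbhd (nquot_vertices modP M qV) (nquot_rel (nquot_rel e)) (orbit modP M (orb y))|
     <= quot_valency e K y)%N.
Proof.
set qqV := nquot_vertices modP M qV.
have qqVP C : C \in qqV -> exists c, C = orbit modP M (orb c).
  by case/imsetP=> _ /nquot_verticesP[c ->] ->; exists c.
have cover_inj : {in nbhd qqV (nquot_rel (nquot_rel e)) (orbit modP M (orb y)) &, injective cover}.
  move=> C1 C2; rewrite !inE => /andP[/qqVP[c1 ->] _] /andP[/qqVP[c2 ->] _].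
  by rewrite !cover_orbit_modP => /orbit_modP_eq.
rewrite -(card_in_imset cover_inj); apply: subset_leq_card; apply/subsetP => D /imsetP[C].
rewrite inE => /andP[/qqVP[c ->] /andP[neq /existsP[B /andP[By /existsP[B' /andP[B'c]]]]]].
case/andP=> _ /existsP[u /andP[uB /existsP[w /andP[wB' euw]]]] ->.
rewrite cover_orbit_modP inE orbit_nquot_vertex /nquot_rel /=; apply/andP; split.
  by apply: contra neq => /eqP/orbit_modP_eq ->.
apply/existsP; exists u; rewrite -cover_orbit_modP; apply/andP; split.
  by apply/bigcupP; exists B.
by apply/existsP; exists w; rewrite -cover_orbit_modP euw andbT; apply/bigcupP; exists B'.
Qed.

End DoubleQuotient.

Definition tetravalent_quotient (N : {group {perm V}}) :=
  (N <| G) && [forall x, quot_valency e N x == 4].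

Lemma tetravalent_quotient1 : tetravalent_quotient 1.
Proof.
have orbit1 (y : V) : orbit 'P 1 y = [set y] by apply/orbit1P; rewrite afix1 inE.
rewrite /tetravalent_quotient normal1; apply/forallP => x; apply/eqP.
rewrite quot_valencyE ?normal1 // /nbhd_orbits orbit1 (eq_imset _ orbit1).
by rewrite (mem_imset _ _ set1_inj) card_imset ?e_reg4 ?inE ?e_irr //; apply: set1_inj.
Qed.

Section Maximal.
Variable N : {group {perm V}}.
Hypothesis maxN : [max N | tetravalent_quotient N].

Lemma maximal_kernel : 'C_G(nquot_vertices 'P N [set: V] | 'P^*) = N.
Proof.
have [/andP[nsNG /forallP N4] maxP] := maxgroupP maxN.
apply: maxP; last by rewrite subsetI normal_sub ?nquot_vertices_cent.
rewrite /tetravalent_quotient kernel_normal //; apply/forallP => x.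
by rewrite (quot_valency_eq_orbits e (kernel_orbit nsNG)) N4.
Qed.

Hypothesis e_conn : gconnected [set: V] e.

Lemma maximal_basic :
  basic ('P^* %% N)%act (G / N)%G (nquot_vertices 'P N [set: V]) (nquot_rel e).
Proof.
have [/andP[nsNG /forallP N4] maxP] := maxgroupP maxN.
have {}N4 x : quot_valency e N x = 4 by apply/eqP.
split; [exact: nquot_connected | exact: quot_regular | exact: quot_half_arc_transitive |].
move=> M nsM ntM _ /imsetP[_ /nquot_verticesP[y ->] ->].
apply: leq_trans (double_quot_valency_le nsNG nsM y) (quot_valency_le2 _ _).
  exact: cosetpre_normalG.
apply: contra ntM => /eqP K4; apply/eqP.
rewrite -(cosetpreK M) (maxP _ _ (sub_cosetpre M)) ?trivg_quotient //.
rewrite /tetravalent_quotient cosetpre_normalG //; apply/forallP=> x.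
by rewrite (quot_valency_const _ x y) ?K4 ?cosetpre_normalG.
Qed.

End Maximal.
End HalfArcTransitive.

Theorem lemma5p1 (V : finType) (e : rel V) (G : {group {perm V}}) :
  symmetric e -> irreflexive e ->
  gconnected [set: V] e -> regular_of [set: V] e 4 ->
  half_arc_transitive 'P G [set: V] e ->
  exists N : {group {perm V}},
    [/\ N <| G,
        'C_G(nquot_vertices 'P N [set: V] | 'P^*) = N &
        basic ('P^* %% N)%act (G / N)%G
          (nquot_vertices 'P N [set: V]) (nquot_rel e)].
Proof.
move=> e_sym e_irr e_conn e_reg4 G_hat.
have [x0 [y0 e0]] := edge_exists e_reg4 G_hat.
have [N maxN _] := maxgroup_exists (tetravalent_quotient1 e_irr e_reg4 G_hat).
have [/andP[nsNG _] _] := maxgroupP maxN.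
exists N; split; [by [] | exact: maximal_kernel maxN |].
exact: (maximal_basic e_sym e_irr e_reg4 G_hat e0 maxN e_conn).
Qed.
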